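(* For $n\in\{0,1,2,\dots\}$ define \[ b_n=\frac14\frac{(-1)^n}{n!}\sum_{k=0}^{n}(-1)^kS(n,k)(2k-1)!!, \] \[ c_n=\frac{(-1)^{n+1}}{n!}\sum_{k=1}^{n}(-1)^kS(n,k)\frac{k!}{2^k}\sum_{\ell=1}^{k}(-1)^{\ell}\binom{2k-\ell}{k}\frac{2^{\ell/2}}{\ell}\sin\frac{3\ell\pi}{4}. \] Then, with principal branches of the square root and of $\arctan$, for $|x|<\ln 2$, \[ \frac{1}{4\sqrt{2e^{-x}-1}}=\sum_{n=0}^{\infty}b_nx^n \qquad\text{and}\qquad \frac{\frac{\pi}{4}-\arctan\sqrt{2e^{-x}-1}}{\sqrt{2e^{-x}-1}}=\sum_{n=0}^{\infty}c_nx^n . \]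
   Context: $S(n,k)$ are the Stirling numbers of the second kind, given by $\frac{(e^x-1)^k}{k!}=\sum_{n\ge k}S(n,k)\frac{x^n}{n!}$. $(2k-1)!!=1\cdot3\cdots(2k-1)$ for $k\ge1$, and $(-1)!!=1$. An empty sum is $0$. *)

From Stdlib Require Import Reals Lra Factorial.
From Coquelicot Require Import Coquelicot.
Open Scope R_scope.

Fixpoint stirling2 (n k : nat) : nat :=
  match n, k with
  | O, O => 1
  | O, S _ => 0
  | S _, O => 0
  | S n', S k' => (S k' * stirling2 n' (S k') + stirling2 n' k')%nat
  end.

(* oddfact k = (2k-1)!! = 1*3*...*(2k-1), with oddfact 0 = (-1)!! = 1 *)
Fixpoint oddfact (k : nat) : nat :=
  match k with
  | O => 1
  | S k' => ((2 * k' + 1) * oddfact k')%nat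
  end.

Definition binR (n k : nat) : R := Stdlib.Reals.Binomial.C n k.

(* sum_n_m f a b = f a + ... + f b (empty, i.e. 0, if b < a) *)
Definition b_coef (n : nat) : R :=
  / 4 * (-1) ^ n / INR (Factorial.fact n) *
  sum_n_m (fun k => (-1) ^ k * INR (stirling2 n k) * INR (oddfact k)) 0 n.

Definition c_coef (n : nat) : R :=
  (-1) ^ (n + 1) / INR (Factorial.fact n) *
  sum_n_m (fun k => (-1) ^ k * INR (stirling2 n k) * INR (Factorial.fact k) / 2 ^ k *
     sum_n_m (fun l => (-1) ^ l * binR (2 * k - l) k * Rpower 2 (INR l / 2) / INR l
                         * sin (3 * INR l * PI / 4)) 1 k) 1 n.

(* Both right-hand sides have the form F = G / w with w = sqrt (2 e^{-x} - 1) and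
   G' = kappa / w (G = 1/4, kappa = 0 for b; G = pi/4 - atan w, kappa = 1/2 for c),
   so F solves (2 e^{-x} - 1) F' - e^{-x} F = kappa.  Writing
   F = sum_k alpha_k (e^{-x} - 1)^k / k!, whose Taylor coefficients are given by S(n,k),
   this equation reduces to the recurrence alpha_{k+1} + (2k+1) alpha_k = - kappa (-1)^k k!,
   satisfied by the explicit alpha_k behind b_n and c_n (for c_n via ballot numbers and the
   powers of 1 - i).  Multiplied by e^x the equation reads 2 F' - e^x F' = F + kappa e^x,
   a coefficient recursion with nonnegative weights which shows |F_n| rho^n bounded whenever
   e^rho < 2.  So the series converges for |x| < ln 2, and there its sum times w differs
   from G by a function with zero derivative that vanishes at 0. *)

From Stdlib Require Import Reals Lra Lia Factorial.
From Coquelicot Require Import Coquelicot.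
Open Scope R_scope.

Definition PS_one (n : nat) : R := match n with O => 1 | S _ => 0 end.

Lemma sum_f_R0_S_l (f : nat -> R) n :
  sum_f_R0 f (S n) = f O + sum_f_R0 (fun i => f (S i)) n.
Proof. rewrite decomp_sum; [reflexivity | lia]. Qed.

Lemma PS_mult_comm a b n : PS_mult a b n = PS_mult b a n.
Proof.
  unfold PS_mult. rewrite <- sum_f_R0_skip. apply sum_eq. intros i Hi.
  replace (n - (n - i))%nat with i by lia. ring.
Qed.

Lemma PS_mult_ext_r a b b' n :
  (forall m, (m <= n)%nat -> b m = b' m) -> PS_mult a b n = PS_mult a b' n.
Proof. intros H. unfold PS_mult. apply sum_eq. intros i Hi. rewrite H by lia. ring. Qed.

Lemma PS_mult_ext_l a a' b n :
  (forall m, (m <= n)%nat -> a m = a' m) -> PS_mult a b n = PS_mult a' b n.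
Proof. intros H. rewrite !(PS_mult_comm _ b). apply PS_mult_ext_r, H. Qed.

Lemma PS_mult_plus_r a b c n :
  PS_mult a (fun m => b m + c m) n = PS_mult a b n + PS_mult a c n.
Proof. unfold PS_mult. rewrite <- plus_sum. apply sum_eq. intros; ring. Qed.

Lemma PS_mult_scal_r a b c n : PS_mult a (fun m => c * b m) n = c * PS_mult a b n.
Proof. unfold PS_mult. rewrite scal_sum. apply sum_eq. intros; ring. Qed.

Lemma PS_mult_scal_l a b c n : PS_mult (fun m => c * a m) b n = c * PS_mult a b n.
Proof. rewrite PS_mult_comm, PS_mult_scal_r, PS_mult_comm. reflexivity. Qed.

Lemma PS_mult_zero_r a n : PS_mult a (fun _ => 0) n = 0.
Proof. unfold PS_mult. rewrite (sum_eq _ (fun _ => 0)), sum_cte by (intros; ring). ring. Qed.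

Lemma PS_mult_one_l a n : PS_mult PS_one a n = a n.
Proof.
  unfold PS_mult. destruct n as [|n].
  - simpl. ring.
  - rewrite sum_f_R0_S_l, Nat.sub_0_r.
    rewrite (sum_eq _ (fun _ => 0)) by (intros; simpl; ring).
    rewrite sum_cte. simpl. ring.
Qed.

Lemma PS_mult_one_r a n : PS_mult a PS_one n = a n.
Proof. rewrite PS_mult_comm. apply PS_mult_one_l. Qed.

Lemma PS_derive_mult a b n :
  PS_derive (PS_mult a b) n = PS_mult (PS_derive a) b n + PS_mult a (PS_derive b) n.
Proof.
  unfold PS_derive, PS_mult.
  transitivity (sum_f_R0 (fun k => INR k * (a k * b (S n - k)%nat)) (S n)
              + sum_f_R0 (fun k => INR (S n - k) * (a k * b (S n - k)%nat)) (S n)).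
  - rewrite <- plus_sum, scal_sum. apply sum_eq. intros i Hi.
    rewrite <- Rmult_plus_distr_r, <- plus_INR.
    replace (i + (S n - i))%nat with (S n) by lia. ring.
  - f_equal.
    + rewrite sum_f_R0_S_l. simpl INR at 1. rewrite Rmult_0_l, Rplus_0_l.
      apply sum_eq. intros i Hi. replace (S n - S i)%nat with (n - i)%nat by lia. ring.
    + rewrite tech5, Nat.sub_diag. simpl INR at 2. rewrite Rmult_0_l, Rplus_0_r.
      apply sum_eq. intros i Hi. replace (S n - i)%nat with (S (n - i)) by lia. ring.
Qed.

Lemma PS_coef_S_of_derive a b n : PS_derive a n = PS_derive b n -> a (S n) = b (S n).
Proof.
  unfold PS_derive. intros H.
  apply Rmult_eq_reg_l with (INR (S n)); [exact H | apply not_0_INR; lia].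
Qed.

Definition exp_coef (n : nat) : R := / INR (fact n).
Definition expN_coef (n : nat) : R := (-1) ^ n / INR (fact n).
Definition expNm1_coef (n : nat) : R := match n with O => 0 | S _ => expN_coef n end.

Lemma INR_fact_S n : INR (fact (S n)) = INR (S n) * INR (fact n).
Proof. rewrite fact_simpl, mult_INR. reflexivity. Qed.

Lemma PS_derive_exp_coef n : PS_derive exp_coef n = exp_coef n.
Proof.
  unfold PS_derive, exp_coef. rewrite INR_fact_S.
  field. split; [apply INR_fact_neq_0 | apply not_0_INR; lia].
Qed.

Lemma PS_derive_expN_coef n : PS_derive expN_coef n = - expN_coef n.
Proof.
  unfold PS_derive, expN_coef. rewrite INR_fact_S. simpl pow.
  field. split; [apply INR_fact_neq_0 | apply not_0_INR; lia].
Qed.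

Lemma PS_derive_expNm1_coef n : PS_derive expNm1_coef n = - expN_coef n.
Proof. apply PS_derive_expN_coef. Qed.

Lemma PS_mult_expN_coef a n : PS_mult expN_coef a n = a n + PS_mult expNm1_coef a n.
Proof.
  rewrite <- (PS_mult_one_l a n). unfold PS_mult.
  rewrite <- plus_sum. apply sum_eq. intros [|i] _; unfold PS_one, expNm1_coef, expN_coef.
  - simpl. field.
  - ring.
Qed.

Lemma PS_mult_exp_expN_coef n : forall a,
  PS_mult exp_coef (PS_mult expN_coef a) n = a n.
Proof.
  induction n as [|n IH]; intros a.
  - unfold PS_mult, exp_coef, expN_coef. simpl. field.
  - apply PS_coef_S_of_derive.
    rewrite PS_derive_mult, (PS_mult_ext_l _ exp_coef) by (intros; apply PS_derive_exp_coef).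
    rewrite (PS_mult_ext_r _ (PS_derive (PS_mult expN_coef a))
               (fun m => -1 * PS_mult expN_coef a m + PS_mult expN_coef (PS_derive a) m)).
    2: { intros m _. rewrite PS_derive_mult, (PS_mult_ext_l _ (fun k => -1 * expN_coef k))
           by (intros; rewrite PS_derive_expN_coef; ring).
         rewrite PS_mult_scal_l. reflexivity. }
    rewrite PS_mult_plus_r, PS_mult_scal_r, !IH. ring.
Qed.

(* The coefficients of (e^{-x} - 1)^k / k!, by the generating function of S(n,k). *)
Definition stirling_coef (k n : nat) : R := (-1) ^ n * INR (stirling2 n k) / INR (fact n).

Definition stirling_coef_pred (k : nat) : nat -> R :=
  match k with O => fun _ => 0 | S j => stirling_coef j end.

Lemma stirling2_gt n : forall k, (n < k)%nat -> stirling2 n k = 0%nat.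
Proof.
  induction n as [|n IH]; intros [|k] Hk; try lia; [reflexivity |].
  simpl. rewrite !IH by lia. lia.
Qed.

Lemma stirling_coef_gt k n : (n < k)%nat -> stirling_coef k n = 0.
Proof. intros H. unfold stirling_coef. rewrite stirling2_gt by exact H. simpl. lra. Qed.

Lemma stirling_coef_0 n : stirling_coef 0 n = PS_one n.
Proof.
  unfold stirling_coef. destruct n; simpl stirling2; simpl PS_one.
  - simpl. field.
  - simpl INR. lra.
Qed.

Lemma PS_derive_stirling_coef k n :
  PS_derive (stirling_coef k) n = - (stirling_coef_pred k n + INR k * stirling_coef k n).
Proof.
  unfold PS_derive, stirling_coef_pred, stirling_coef. rewrite INR_fact_S.
  assert (INR (fact n) <> 0) by apply INR_fact_neq_0.
  assert (INR (S n) <> 0) by (apply not_0_INR; lia).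
  destruct k as [|k].
  - simpl stirling2. simpl INR. field. tauto.
  - change (stirling2 (S n) (S k)) with (S k * stirling2 n (S k) + stirling2 n k)%nat.
    rewrite plus_INR, mult_INR. simpl pow. field. tauto.
Qed.

Lemma PS_mult_expNm1_stirling_coef n : forall k,
  PS_mult expNm1_coef (stirling_coef k) n = INR (S k) * stirling_coef (S k) n.
Proof.
  induction n as [|n IH]; intros k.
  - rewrite (stirling_coef_gt (S k) 0) by lia. unfold PS_mult, expNm1_coef. simpl. ring.
  - assert (Hpred : PS_mult expNm1_coef (stirling_coef_pred k) n = INR k * stirling_coef k n).
    { destruct k as [|k]; simpl stirling_coef_pred.
      + rewrite PS_mult_zero_r. simpl. ring.
      + apply IH. }
    apply (PS_coef_S_of_derive _ (fun m => INR (S k) * stirling_coef (S k) m)).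
    transitivity (INR (S k) * PS_derive (stirling_coef (S k)) n); [| unfold PS_derive; ring].
    rewrite PS_derive_mult, (PS_mult_ext_l _ (fun m => -1 * expN_coef m))
      by (intros; rewrite PS_derive_expNm1_coef; ring).
    rewrite (PS_mult_ext_r _ (PS_derive (stirling_coef k))
               (fun m => -1 * stirling_coef_pred k m + (- INR k) * stirling_coef k m))
      by (intros; rewrite PS_derive_stirling_coef; ring).
    rewrite PS_mult_scal_l, PS_mult_expN_coef, PS_mult_plus_r, !PS_mult_scal_r, Hpred, IH.
    rewrite PS_derive_stirling_coef. simpl stirling_coef_pred. rewrite S_INR. ring.
Qed.

Lemma PS_mult_expNm1_stirling_coef_pred k n :
  PS_mult expNm1_coef (stirling_coef_pred k) n = INR k * stirling_coef k n.
Proof.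
  destruct k as [|k]; simpl stirling_coef_pred.
  - rewrite PS_mult_zero_r. simpl. ring.
  - apply PS_mult_expNm1_stirling_coef.
Qed.

Definition ode_op (g : nat -> R) (n : nat) : R :=
  2 * PS_mult expN_coef (PS_derive g) n - PS_derive g n - PS_mult expN_coef g n.

Lemma ode_op_ext g h n :
  (forall m, (m <= S n)%nat -> g m = h m) -> ode_op g n = ode_op h n.
Proof.
  intros Hgh. unfold ode_op.
  rewrite (PS_mult_ext_r _ (PS_derive g) (PS_derive h))
    by (intros m Hm; unfold PS_derive; rewrite Hgh by lia; reflexivity).
  rewrite (PS_mult_ext_r _ g h) by (intros m Hm; apply Hgh; lia).
  unfold PS_derive. rewrite Hgh by lia. reflexivity.
Qed.

Lemma ode_op_plus g h n : ode_op (fun m => g m + h m) n = ode_op g n + ode_op h n.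
Proof.
  unfold ode_op.
  rewrite (PS_mult_ext_r _ (PS_derive _) (fun m => PS_derive g m + PS_derive h m))
    by (intros; unfold PS_derive; ring).
  rewrite !PS_mult_plus_r. unfold PS_derive. ring.
Qed.

Lemma ode_op_scal c g n : ode_op (fun m => c * g m) n = c * ode_op g n.
Proof.
  unfold ode_op.
  rewrite (PS_mult_ext_r _ (PS_derive _) (fun m => c * PS_derive g m))
    by (intros; unfold PS_derive; ring).
  rewrite !PS_mult_scal_r. unfold PS_derive. ring.
Qed.

Lemma ode_op_stirling_coef k n :
  ode_op (stirling_coef k) n = - stirling_coef_pred k n - (3 * INR k + 1) * stirling_coef k n
                               - (INR k + 1) * (2 * INR k + 1) * stirling_coef (S k) n.
Proof.
  unfold ode_op. rewrite !PS_mult_expN_coef.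
  rewrite (PS_mult_ext_r _ (PS_derive (stirling_coef k))
             (fun m => -1 * stirling_coef_pred k m + (- INR k) * stirling_coef k m))
    by (intros; rewrite PS_derive_stirling_coef; ring).
  rewrite PS_mult_plus_r, !PS_mult_scal_r, PS_mult_expNm1_stirling_coef_pred,
    PS_mult_expNm1_stirling_coef, PS_derive_stirling_coef, S_INR.
  ring.
Qed.

Definition stirling_sum (alpha : nat -> R) (M n : nat) : R :=
  sum_f_R0 (fun k => alpha k * stirling_coef k n) M.

Definition stirling_transform (alpha : nat -> R) (n : nat) : R := stirling_sum alpha n n.

Lemma stirling_sum_stable alpha M n :
  (n <= M)%nat -> stirling_sum alpha M n = stirling_transform alpha n.
Proof.
  induction M as [|M IH]; intros Hn.
  - replace n with 0%nat by lia. reflexivity.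
  - destruct (Nat.eq_dec n (S M)) as [-> | Hne]; [reflexivity |].
    unfold stirling_sum in *. rewrite tech5, IH by lia.
    rewrite stirling_coef_gt by lia. ring.
Qed.

Lemma ode_op_stirling_sum alpha M n :
  ode_op (stirling_sum alpha M) n
  = sum_f_R0 (fun k => alpha k * ode_op (stirling_coef k) n) M.
Proof.
  induction M as [|M IH]; simpl sum_f_R0.
  - apply ode_op_scal.
  - rewrite <- IH, <- ode_op_scal. apply ode_op_plus.
Qed.

Section StirlingTransformOde.

Variables (alpha : nat -> R) (kappa : R).
Hypothesis alpha_rec : forall k,
  alpha (S k) + (2 * INR k + 1) * alpha k = - kappa * (-1) ^ k * INR (fact k).

Lemma alpha_rec2 j :
  alpha (S (S j)) + (3 * INR (S j) + 1) * alpha (S j)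
  + INR (S j) * (2 * INR j + 1) * alpha j = 0.
Proof.
  pose proof (alpha_rec (S j)) as H1. pose proof (alpha_rec j) as H2.
  rewrite INR_fact_S in H1. simpl pow in H1. rewrite S_INR in *.
  replace (alpha (S (S j))) with (- kappa * (-1 * (-1) ^ j) * ((INR j + 1) * INR (fact j))
            - (2 * (INR j + 1) + 1) * alpha (S j)) by lra.
  replace (alpha (S j)) with (- kappa * (-1) ^ j * INR (fact j) - (2 * INR j + 1) * alpha j)
    by lra.
  ring.
Qed.

Lemma ode_op_stirling_sum_telescope M n :
  sum_f_R0 (fun k => alpha k * ode_op (stirling_coef k) n) M - kappa * stirling_coef 0 n
  = alpha (S M) * stirling_coef M n
    - alpha M * (INR M + 1) * (2 * INR M + 1) * stirling_coef (S M) n.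
Proof.
  induction M as [|M IH]; simpl sum_f_R0; rewrite ode_op_stirling_coef.
  - pose proof (alpha_rec 0) as H0. simpl in H0 |- *.
    replace (alpha 1%nat) with (- kappa - alpha 0%nat) by lra. ring.
  - simpl stirling_coef_pred.
    replace (alpha (S (S M))) with (- (3 * INR (S M) + 1) * alpha (S M)
                                    - INR (S M) * (2 * INR M + 1) * alpha M)
      by (pose proof (alpha_rec2 M); lra).
    rewrite S_INR in *. lra.
Qed.

Lemma ode_op_stirling_transform n :
  ode_op (stirling_transform alpha) n = kappa * PS_one n.
Proof.
  rewrite (ode_op_ext _ (stirling_sum alpha (S n)))
    by (intros; symmetry; apply stirling_sum_stable; lia).
  pose proof (ode_op_stirling_sum_telescope (S n) n) as H.
  rewrite stirling_coef_0, (stirling_coef_gt (S n) n), (stirling_coef_gt (S (S n)) n) in H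
    by lia.
  rewrite ode_op_stirling_sum. lra.
Qed.

(* [ode_op F = kappa] multiplied by e^x. *)
Lemma stirling_transform_ode n :
  2 * PS_derive (stirling_transform alpha) n
  - PS_mult exp_coef (PS_derive (stirling_transform alpha)) n
  = stirling_transform alpha n + kappa * exp_coef n.
Proof.
  pose proof (PS_mult_exp_expN_coef n (fun m => 2 * PS_derive (stirling_transform alpha) m
                                               + -1 * stirling_transform alpha m)) as H.
  rewrite (PS_mult_ext_r _ _ (fun m => PS_derive (stirling_transform alpha) m
                                       + kappa * PS_one m)) in H.
  2: { intros m _. rewrite PS_mult_plus_r, !PS_mult_scal_r.
       pose proof (ode_op_stirling_transform m) as HE. unfold ode_op in HE. lra. }
  rewrite PS_mult_plus_r, PS_mult_scal_r, PS_mult_one_r in H. lra.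
Qed.

End StirlingTransformOde.

Lemma exp_coef_pos n : 0 < exp_coef n.
Proof. apply Rinv_0_lt_compat, lt_0_INR, lt_O_fact. Qed.

Lemma exp_coef_le_1 n : exp_coef n <= 1.
Proof.
  unfold exp_coef. rewrite <- Rinv_1. apply Rinv_le_contravar; [lra |].
  apply (le_INR 1), lt_O_fact.
Qed.

Lemma sum_exp_coef_le_exp r n : 0 <= r -> sum_f_R0 (fun i => exp_coef i * r ^ i) n <= exp r.
Proof.
  intros Hr. unfold exp. destruct (exist_exp r) as [l Hl]. simpl.
  apply (growing_ineq (fun n => sum_f_R0 (fun i => exp_coef i * r ^ i) n)); [| exact Hl].
  intros m. rewrite tech5.
  pose proof (Rmult_le_pos _ _ (Rlt_le _ _ (exp_coef_pos (S m))) (pow_le r (S m) Hr)). lra.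
Qed.

Lemma sum_exp_coef_S_le r n :
  0 <= r -> sum_f_R0 (fun i => exp_coef (S i) * r ^ S i) n <= exp r - 1.
Proof.
  intros Hr. pose proof (sum_exp_coef_le_exp r (S n) Hr) as H.
  rewrite sum_f_R0_S_l in H.
  replace (exp_coef 0 * r ^ 0) with 1 in H by (unfold exp_coef; simpl; field). lra.
Qed.

Lemma sum_f_R0_term_le (f : nat -> R) m N :
  (forall i, 0 <= f i) -> (m <= N)%nat -> f m <= sum_f_R0 f N.
Proof.
  intros Hf Hm. induction N as [|N IH].
  - replace m with 0%nat by lia. simpl. lra.
  - rewrite tech5. destruct (Nat.eq_dec m (S N)) as [-> | Hne].
    + pose proof (cond_pos_sum f N Hf). lra.
    + pose proof (Hf (S N)). specialize (IH ltac:(lia)). lra.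
Qed.

Section CoefBound.

Variables (F : nat -> R) (kappa rho : R).
Hypothesis rho_pos : 0 < rho.
Hypothesis exp_rho_lt_2 : exp rho < 2.
Hypothesis F_ode : forall n,
  2 * PS_derive F n - PS_mult exp_coef (PS_derive F) n = F n + kappa * exp_coef n.

Lemma rho_le_1 : rho <= 1.
Proof.
  destruct (Rle_lt_dec rho 1) as [H | H]; [exact H |].
  pose proof (exp_ineq1 1 R1_neq_R0). pose proof (exp_increasing 1 rho H). lra.
Qed.

Lemma PS_derive_S_recursion n :
  PS_derive F (S n) = sum_f_R0 (fun i => exp_coef (S i) * PS_derive F (n - i)) n
                      + F (S n) + kappa * exp_coef (S n).
Proof.
  pose proof (F_ode (S n)) as H. unfold PS_mult in H. rewrite sum_f_R0_S_l in H.
  replace (exp_coef 0) with 1 in H by (unfold exp_coef; simpl; field).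
  rewrite Nat.sub_0_r in H. simpl (S n - S _)%nat in H. lra.
Qed.

Section Step.

Variables (K : R) (n : nat).
Hypothesis kappa_le_K : Rabs kappa <= K.
Hypothesis bound_upto : forall m, (m <= S n)%nat -> Rabs (F m) * rho ^ m <= K.

Lemma convolution_bound :
  Rabs (sum_f_R0 (fun i => exp_coef (S i) * PS_derive F (n - i)) n) * rho ^ S (S n)
  <= INR (S (S n)) * K * (exp rho - 1).
Proof.
  assert (Hterm : forall i, (i <= n)%nat ->
    Rabs (exp_coef (S i) * PS_derive F (n - i)) * rho ^ S (S n)
    <= exp_coef (S i) * rho ^ S i * (INR (S (S n)) * K)).
  { intros i Hi. rewrite (Rmult_comm (exp_coef (S i) * rho ^ S i)).
    replace (S (S n)) with (S (n - i) + S i)%nat at 1 by lia.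
    rewrite pow_add. unfold PS_derive.
    rewrite !Rabs_mult, (Rabs_pos_eq (exp_coef _)), (Rabs_pos_eq (INR _))
      by (apply pos_INR || (left; apply exp_coef_pos)).
    pose proof (bound_upto (S (n - i)) ltac:(lia)).
    assert (INR (S (n - i)) <= INR (S (S n))) by (apply le_INR; lia).
    set (e := exp_coef (S i) * rho ^ S i).
    set (g := Rabs (F (S (n - i))) * rho ^ S (n - i)).
    assert (0 <= e) by (apply Rmult_le_pos; [left; apply exp_coef_pos | apply pow_le; lra]).
    assert (0 <= g) by (apply Rmult_le_pos; [apply Rabs_pos | apply pow_le; lra]).
    pose proof (pos_INR (S (n - i))).
    transitivity (INR (S (n - i)) * g * e); [unfold e, g; right; ring |].
    apply Rmult_le_compat_r; [assumption |].
    apply Rmult_le_compat; assumption. }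
  eapply Rle_trans.
  { apply Rmult_le_compat_r; [apply pow_le; lra | apply sum_f_R0_triangle]. }
  rewrite Rmult_comm, scal_sum.
  eapply Rle_trans; [apply sum_Rle; exact Hterm |].
  rewrite <- scal_sum. apply Rmult_le_compat_l.
  - pose proof (Rabs_pos kappa). pose proof (pos_INR (S (S n))). nra.
  - apply sum_exp_coef_S_le. lra.
Qed.

Lemma step_bound :
  INR (S (S n)) * (Rabs (F (S (S n))) * rho ^ S (S n))
  <= INR (S (S n)) * K * (exp rho - 1) + 2 * K.
Proof.
  pose proof rho_le_1.
  assert (HD : INR (S (S n)) * (Rabs (F (S (S n))) * rho ^ S (S n))
               = Rabs (PS_derive F (S n)) * rho ^ S (S n)).
  { unfold PS_derive. rewrite Rabs_mult, (Rabs_pos_eq (INR _)) by apply pos_INR. ring. }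
  assert (HF1 : Rabs (F (S n)) * rho ^ S (S n) <= K).
  { pose proof (bound_upto (S n) ltac:(lia)).
    pose proof (Rmult_le_pos _ _ (Rabs_pos (F (S n))) (pow_le rho (S n) ltac:(lra))).
    change (rho ^ S (S n)) with (rho * rho ^ S n). nra. }
  assert (Hkappa : Rabs (kappa * exp_coef (S n)) * rho ^ S (S n) <= K).
  { rewrite Rabs_mult, (Rabs_pos_eq (exp_coef _)) by (left; apply exp_coef_pos).
    pose proof (exp_coef_le_1 (S n)). pose proof (exp_coef_pos (S n)).
    pose proof (pow_le rho (S (S n)) ltac:(lra)).
    pose proof (pow_incr rho 1 (S (S n)) ltac:(lra)). rewrite pow1 in *.
    pose proof (Rabs_pos kappa).
    assert (Rabs kappa * exp_coef (S n) <= Rabs kappa) by nra.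
    assert (0 <= Rabs kappa * exp_coef (S n)) by nra. nra. }
  rewrite HD, PS_derive_S_recursion.
  pose proof convolution_bound.
  pose proof (pow_le rho (S (S n)) ltac:(lra)).
  pose proof (Rabs_triang (sum_f_R0 (fun i => exp_coef (S i) * PS_derive F (n - i)) n + F (S n))
                          (kappa * exp_coef (S n))).
  pose proof (Rabs_triang (sum_f_R0 (fun i => exp_coef (S i) * PS_derive F (n - i)) n) (F (S n))).
  nra.
Qed.

End Step.

(* Once n (2 - exp rho) >= 2, [step_bound] gives n g n <= n K (exp rho - 1) + 2 K <= n K. *)
Lemma coef_bound : exists K, forall n, Rabs (F n) * rho ^ n <= K.
Proof.
  destruct (INR_archimed (2 - exp rho) 2) as [N HN]; [lra |].
  set (g m := Rabs (F m) * rho ^ m).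
  assert (g_nonneg : forall m, 0 <= g m)
    by (intros; apply Rmult_le_pos; [apply Rabs_pos | apply pow_le; lra]).
  exists (Rabs kappa + sum_f_R0 g N). set (K := Rabs kappa + sum_f_R0 g N).
  assert (HK : Rabs kappa <= K) by (pose proof (cond_pos_sum g N g_nonneg); unfold K; lra).
  intros n. change (g n <= K).
  induction n as [n IH] using Wf_nat.lt_wf_ind.
  destruct (Compare_dec.le_lt_dec n N) as [Hn | Hn].
  - pose proof (sum_f_R0_term_le g n N g_nonneg Hn). pose proof (Rabs_pos kappa). unfold K. lra.
  - destruct n as [|[|n]]; [lia | destruct N; [simpl in HN; lra | lia] |].
    pose proof (step_bound K n HK (fun m Hm => IH m ltac:(lia))) as Hstep.
    assert (INR N <= INR (S (S n))) by (apply le_INR; lia).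
    assert (0 < INR (S (S n))) by (apply lt_0_INR; lia).
    assert (0 <= K) by (pose proof (Rabs_pos kappa); lra).
    assert (2 * K <= INR (S (S n)) * (2 - exp rho) * K)
      by (apply Rmult_le_compat_r; nra).
    apply Rmult_le_reg_l with (INR (S (S n))); [assumption |]. unfold g. lra.
Qed.

Lemma CV_radius_ge : Rbar_le rho (CV_radius F).
Proof.
  destruct coef_bound as [K HK]. apply (proj1 (CV_radius_bounded F)). exists K.
  intros n. rewrite Rabs_mult, (Rabs_pos_eq (rho ^ n)) by (apply pow_le; lra). apply HK.
Qed.

End CoefBound.

Definition wsqrt (t : R) : R := sqrt (2 * exp (- t) - 1).

Lemma wsqrt_radicand_pos t : t < ln 2 -> 0 < 2 * exp (- t) - 1.
Proof.
  intros Ht. rewrite exp_Ropp.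
  assert (exp t < 2) by (rewrite <- (exp_ln 2) by lra; apply exp_increasing, Ht).
  pose proof (exp_pos t).
  enough (1 < 2 * / exp t) by lra.
  apply (Rmult_lt_reg_r (exp t)); [lra |].
  rewrite Rmult_assoc, Rinv_l by lra. lra.
Qed.

Lemma wsqrt_0 : wsqrt 0 = 1.
Proof. unfold wsqrt. rewrite Ropp_0, exp_0. replace (2 * 1 - 1) with 1 by ring. apply sqrt_1. Qed.

Lemma wsqrt_pos t : t < ln 2 -> 0 < wsqrt t.
Proof. intros Ht. apply sqrt_lt_R0, wsqrt_radicand_pos, Ht. Qed.

Lemma wsqrt_sqr t : t < ln 2 -> wsqrt t * wsqrt t = 2 * exp (- t) - 1.
Proof. intros Ht. apply sqrt_sqrt. pose proof (wsqrt_radicand_pos t Ht). lra. Qed.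

Lemma is_derive_wsqrt t : t < ln 2 -> is_derive wsqrt t (- exp (- t) / wsqrt t).
Proof.
  intros Ht. pose proof (wsqrt_radicand_pos t Ht). pose proof (wsqrt_pos t Ht).
  unfold wsqrt in *. auto_derive; [lra |].
  replace (2 * exp (- t) + - (1)) with (2 * exp (- t) - 1) by ring. field. lra.
Qed.

Lemma CV_radius_exp_coef r : 0 <= r -> Rbar_le r (CV_radius exp_coef).
Proof.
  intros Hr. apply (proj1 (CV_radius_bounded exp_coef)). exists (exp r). intros n.
  assert (Hnonneg : forall i, 0 <= exp_coef i * r ^ i)
    by (intros; apply Rmult_le_pos; [left; apply exp_coef_pos | apply pow_le, Hr]).
  rewrite Rabs_pos_eq by apply Hnonneg.
  eapply Rle_trans; [apply (sum_f_R0_term_le _ n n Hnonneg (le_n n)) |].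
  apply sum_exp_coef_le_exp, Hr.
Qed.

Lemma is_series_of_pseries a t l : is_pseries a t l -> is_series (fun n => a n * t ^ n) l.
Proof.
  intros H. eapply is_series_ext; [| exact H]. intros n.
  rewrite pow_n_pow. apply Rmult_comm.
Qed.

Section PSeriesOde.

Variables (F : nat -> R) (kappa : R) (G : R -> R).
Hypothesis F_ode : forall n,
  2 * PS_derive F n - PS_mult exp_coef (PS_derive F) n = F n + kappa * exp_coef n.
Hypothesis G_derive : forall t, Rabs t < ln 2 -> is_derive G t (kappa / wsqrt t).
Hypothesis F_G_0 : F 0%nat = G 0.

Lemma CV_radius_gt t : Rabs t < ln 2 -> Rbar_lt (Rabs t) (CV_radius F).
Proof.
  intros Ht. set (rho := (Rabs t + ln 2) / 2). pose proof (Rabs_pos t).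
  apply Rbar_lt_le_trans with rho; [simpl; unfold rho; lra |].
  apply (CV_radius_ge F kappa); [unfold rho; lra | | exact F_ode].
  rewrite <- (exp_ln 2) by lra. apply exp_increasing. unfold rho. lra.
Qed.

Lemma PSeries_ode t : Rabs t < ln 2 ->
  (2 - exp t) * PSeries (PS_derive F) t = PSeries F t + kappa * exp t.
Proof.
  intros Ht.
  assert (HF : Rbar_lt (Rabs t) (CV_radius F)) by (apply CV_radius_gt, Ht).
  assert (HD : Rbar_lt (Rabs t) (CV_radius (PS_derive F)))
    by (rewrite CV_radius_derive; exact HF).
  assert (HE : Rbar_lt (Rabs t) (CV_radius exp_coef)).
  { apply Rbar_lt_le_trans with (Rabs t + 1); [simpl; lra |].
    apply CV_radius_exp_coef. pose proof (Rabs_pos t). lra. }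
  pose proof (PSeries_correct _ _ (CV_radius_inside _ _ HD)) as SD.
  pose proof (PSeries_correct _ _ (CV_radius_inside _ _ HF)) as SF.
  pose proof (is_exp_Reals t) as SE.
  pose proof (is_pseries_mult _ _ _ _ _ SE SD HE HD) as SM.
  apply is_series_of_pseries in SD, SF, SE, SM.
  assert (Hlhs : is_series (fun n => (F n + kappa * exp_coef n) * t ^ n)
                           ((2 - exp t) * PSeries (PS_derive F) t)).
  { pose proof (is_series_minus _ _ _ _ (is_series_scal 2 _ _ SD) SM) as H.
    replace ((2 - exp t) * _)
      with (plus (scal 2 (PSeries (PS_derive F) t)) (opp (exp t * PSeries (PS_derive F) t)))
      by (unfold plus, opp, scal; simpl; unfold mult, plus, opp; simpl; ring).
    eapply is_series_ext; [| exact H]. intros n. rewrite <- F_ode.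
    unfold minus, plus, opp, scal; simpl. unfold mult, plus, opp; simpl. unfold exp_coef. ring. }
  assert (Hrhs : is_series (fun n => (F n + kappa * exp_coef n) * t ^ n)
                           (PSeries F t + kappa * exp t)).
  { eapply is_series_ext; [| exact (is_series_plus _ _ _ _ SF (is_series_scal kappa _ _ SE))].
    intros n. unfold plus, scal; simpl. unfold mult, plus; simpl. unfold exp_coef. ring. }
  rewrite <- (is_series_unique _ _ Hlhs). exact (is_series_unique _ _ Hrhs).
Qed.

Lemma is_derive_PSeries_mul_wsqrt t : Rabs t < ln 2 ->
  is_derive (fun s => PSeries F s * wsqrt s - G s) t 0.
Proof.
  intros Ht. assert (Ht' : t < ln 2) by (pose proof (Rle_abs t); lra).
  pose proof (is_derive_PSeries F t (CV_radius_gt t Ht)) as HP.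
  pose proof (is_derive_mult _ _ _ _ _ HP (is_derive_wsqrt t Ht') Rmult_comm) as HPw.
  pose proof (is_derive_minus _ _ _ _ _ HPw (G_derive t Ht)) as HD.
  set (P' := PSeries (PS_derive F) t) in *. set (P := PSeries F t) in *.
  assert (Hode : (2 * exp (- t) - 1) * P' = exp (- t) * P + kappa).
  { pose proof (exp_pos t).
    replace (2 * exp (- t) - 1) with (exp (- t) * (2 - exp t))
      by (rewrite exp_Ropp; field; lra).
    rewrite Rmult_assoc. unfold P', P. rewrite PSeries_ode by exact Ht.
    rewrite exp_Ropp. field. lra. }
  pose proof (wsqrt_pos t Ht'). pose proof (wsqrt_sqr t Ht').
  replace 0 with (minus (plus (mult P' (wsqrt t)) (mult P (- exp (- t) / wsqrt t)))
                        (kappa / wsqrt t)); [exact HD |].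
  unfold minus, plus, opp, mult; simpl.
  apply (Rmult_eq_reg_r (wsqrt t)); [| lra].
  field_simplify; [| lra]. nra.
Qed.

(* [PSeries F * wsqrt - G] has zero derivative and vanishes at 0. *)
Theorem is_series_ode_solution x : Rabs x < ln 2 ->
  is_series (fun n => F n * x ^ n) (G x / wsqrt x).
Proof.
  intros Hx.
  destruct (MVT_cor4 (fun s => PSeries F s * wsqrt s - G s) (fun _ => 0) 0 (Rabs x))
    with x as [c [Hc _]].
  { intros c Hc. apply is_derive_PSeries_mul_wsqrt. rewrite Rminus_0_r in Hc. lra. }
  { rewrite Rminus_0_r. lra. }
  rewrite PSeries_0, wsqrt_0, F_G_0 in Hc.
  assert (Hx' : x < ln 2) by (pose proof (Rle_abs x); lra).
  pose proof (wsqrt_pos x Hx').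
  assert (HPG : PSeries F x * wsqrt x = G x) by lra.
  replace (G x / wsqrt x) with (PSeries F x) by (rewrite <- HPG; field; lra).
  apply is_series_of_pseries, PSeries_correct, CV_radius_inside, CV_radius_gt, Hx.
Qed.

End PSeriesOde.

Lemma sum_n_m_0_sum_f_R0 (a : nat -> R) n : sum_n_m a 0 n = sum_f_R0 a n.
Proof. rewrite <- sum_n_Reals. reflexivity. Qed.

Definition alpha_b (k : nat) : R := / 4 * (-1) ^ k * INR (oddfact k).

Lemma alpha_b_rec k :
  alpha_b (S k) + (2 * INR k + 1) * alpha_b k = - 0 * (-1) ^ k * INR (fact k).
Proof.
  unfold alpha_b. change (oddfact (S k)) with ((2 * k + 1) * oddfact k)%nat.
  rewrite mult_INR, plus_INR, mult_INR. simpl. ring.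
Qed.

Lemma b_coef_stirling_transform n : b_coef n = stirling_transform alpha_b n.
Proof.
  unfold b_coef, stirling_transform, stirling_sum.
  rewrite sum_n_m_0_sum_f_R0, scal_sum. apply sum_eq. intros i Hi.
  unfold alpha_b, stirling_coef. field. apply INR_fact_neq_0.
Qed.

Lemma is_series_b_coef x : Rabs x < ln 2 ->
  is_series (fun n => b_coef n * x ^ n) (1 / (4 * sqrt (2 * exp (- x) - 1))).
Proof.
  intros Hx. pose proof (wsqrt_pos x ltac:(pose proof (Rle_abs x); lra)).
  replace (1 / (4 * sqrt (2 * exp (- x) - 1))) with (/ 4 / wsqrt x)
    by (unfold wsqrt in *; field; lra).
  apply (is_series_ext (fun n => stirling_transform alpha_b n * x ^ n));
    [intros n; rewrite b_coef_stirling_transform; reflexivity |].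
  apply (is_series_ode_solution _ 0 (fun _ => / 4)); [| | | exact Hx].
  - apply stirling_transform_ode, alpha_b_rec.
  - intros t _. replace (0 / wsqrt t) with 0 by (unfold Rdiv; ring).
    exact (is_derive_const (/ 4) t).
  - unfold stirling_transform, stirling_sum, alpha_b, stirling_coef. simpl. field.
Qed.

(* cpow_re l + i cpow_im l = (1 - i)^l, as 1 - i = - sqrt 2 e^{3 i pi / 4}. *)
Definition cpow_re (l : nat) : R :=
  (-1) ^ l * Rpower 2 (INR l / 2) * cos (3 * INR l * PI / 4).
Definition cpow_im (l : nat) : R :=
  (-1) ^ l * Rpower 2 (INR l / 2) * sin (3 * INR l * PI / 4).

Lemma cpow_re_0 : cpow_re 0 = 1.
Proof.
  unfold cpow_re. simpl INR.
  replace (0 / 2) with 0 by field. replace (3 * 0 * PI / 4) with 0 by field.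
  rewrite Rpower_O, cos_0 by lra. ring.
Qed.

Lemma cpow_im_0 : cpow_im 0 = 0.
Proof.
  unfold cpow_im. simpl INR. replace (3 * 0 * PI / 4) with 0 by field. rewrite sin_0. ring.
Qed.

Lemma Rpower_2_half_S l : Rpower 2 (INR (S l) / 2) = Rpower 2 (INR l / 2) * sqrt 2.
Proof.
  rewrite S_INR. replace ((INR l + 1) / 2) with (INR l / 2 + / 2) by field.
  rewrite Rpower_plus, Rpower_sqrt by lra. reflexivity.
Qed.

Lemma angle_S l : 3 * INR (S l) * PI / 4 = 3 * INR l * PI / 4 + 3 * (PI / 4).
Proof. rewrite S_INR. field. Qed.

Lemma cpow_re_S l : cpow_re (S l) = cpow_re l + cpow_im l.
Proof.
  unfold cpow_re, cpow_im. rewrite Rpower_2_half_S, angle_S, cos_plus, sin_3PI4, cos_3PI4.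
  simpl pow. field. apply sqrt2_neq_0.
Qed.

Lemma cpow_im_S l : cpow_im (S l) = cpow_im l - cpow_re l.
Proof.
  unfold cpow_re, cpow_im. rewrite Rpower_2_half_S, angle_S, sin_plus, sin_3PI4, cos_3PI4.
  simpl pow. field. apply sqrt2_neq_0.
Qed.

Lemma cpow_re_SS l : cpow_re (S (S l)) = 2 * cpow_im l.
Proof. rewrite !cpow_re_S, cpow_im_S. ring. Qed.

(* Ballot numbers m/(2k-m) * binom(2k-m, k), extended by ballot 0 0 = 1. *)
Definition ballot (k m : nat) : R :=
  match k with
  | O => match m with O => 1 | S _ => 0 end
  | S _ => if Nat.leb m k
           then INR m * INR (fact (2 * k - m - 1)) / (INR (fact k) * INR (fact (k - m)))
           else 0
  end.

Lemma ballot_formula k m : (1 <= k)%nat -> (m <= k)%nat ->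
  ballot k m = INR m * INR (fact (2 * k - m - 1)) / (INR (fact k) * INR (fact (k - m))).
Proof.
  intros Hk Hm. destruct k as [|k]; [lia |]. unfold ballot.
  rewrite (proj2 (Nat.leb_le m (S k)) Hm). reflexivity.
Qed.

Lemma ballot_gt k m : (k < m)%nat -> ballot k m = 0.
Proof.
  intros H. destruct k as [|k]; unfold ballot.
  - destruct m; [lia | reflexivity].
  - rewrite (proj2 (Nat.leb_gt m (S k)) H). reflexivity.
Qed.

Lemma ballot_diag k : ballot k k = 1.
Proof.
  destruct k as [|k]; [reflexivity |]. rewrite ballot_formula by lia.
  replace (2 * S k - S k - 1)%nat with k by lia. rewrite Nat.sub_diag, INR_fact_S.
  simpl (fact 0). simpl (INR 1). field. split; [apply INR_fact_neq_0 | apply not_0_INR; lia].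
Qed.

Lemma ballot_0_r k : (1 <= k)%nat -> ballot k 0 = 0.
Proof.
  intros Hk. rewrite ballot_formula by lia. simpl INR. field.
  split; apply INR_fact_neq_0.
Qed.

Lemma ballot_rec k m : ballot (S k) (S (S m)) = ballot (S k) (S m) - ballot k m.
Proof.
  destruct (Compare_dec.le_lt_dec (S (S m)) (S k)) as [Hle | Hgt].
  - destruct (Nat.le_exists_sub (S m) k ltac:(lia)) as [j [-> _]].
    rewrite !ballot_formula by lia.
    replace (2 * S (j + S m) - S (S m) - 1)%nat with (m + 2 * j + 1)%nat by lia.
    replace (S (j + S m) - S (S m))%nat with j by lia.
    replace (2 * S (j + S m) - S m - 1)%nat with (S (m + 2 * j + 1)) by lia.
    replace (S (j + S m) - S m)%nat with (S j) by lia.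
    replace (2 * (j + S m) - m - 1)%nat with (m + 2 * j + 1)%nat by lia.
    replace (j + S m - m)%nat with (S j) by lia.
    replace (S (j + S m)) with (S (S (m + j))) by lia.
    replace (j + S m)%nat with (S (m + j)) by lia.
    rewrite !INR_fact_S.
    pose proof (INR_fact_neq_0 (m + 2 * j + 1)). pose proof (INR_fact_neq_0 (m + j)).
    pose proof (INR_fact_neq_0 j).
    rewrite !S_INR, !plus_INR, !mult_INR. simpl INR.
    pose proof (pos_INR m). pose proof (pos_INR j).
    field. repeat split; lra.
  - destruct (Nat.eq_dec m k) as [-> | Hne].
    + rewrite ballot_gt, !ballot_diag by lia. ring.
    + rewrite !ballot_gt by lia. ring.
Qed.

Definition ballot_sum (phi : nat -> R) (k : nat) : R :=
  sum_f_R0 (fun m => phi (S m) * ballot k m) k.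

Lemma ballot_sum_ext phi psi k :
  (forall l, phi l = psi l) -> ballot_sum phi k = ballot_sum psi k.
Proof. intros H. unfold ballot_sum. apply sum_eq. intros; rewrite H; reflexivity. Qed.

Lemma ballot_sum_plus phi psi k :
  ballot_sum (fun l => phi l + psi l) k = ballot_sum phi k + ballot_sum psi k.
Proof. unfold ballot_sum. rewrite <- plus_sum. apply sum_eq. intros; ring. Qed.

Lemma ballot_sum_scal c phi k : ballot_sum (fun l => c * phi l) k = c * ballot_sum phi k.
Proof. unfold ballot_sum. rewrite scal_sum. apply sum_eq. intros; ring. Qed.

Lemma ballot_sum_S phi k :
  ballot_sum phi (S k) = phi 2%nat * ballot (S k) 1
                         + ballot_sum (fun l => phi (S l)) (S k)
                         - ballot_sum (fun l => phi (S (S l))) k.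
Proof.
  unfold ballot_sum.
  assert (Hext : sum_f_R0 (fun m => phi (S m) * ballot (S k) m) (S k)
                 = sum_f_R0 (fun m => phi (S m) * ballot (S k) m) (S (S k)))
    by (rewrite (tech5 _ (S k)), (ballot_gt (S k) (S (S k))) by lia; ring).
  rewrite Hext, !sum_f_R0_S_l, ballot_0_r by lia.
  rewrite (sum_eq _ (fun i => phi (S (S (S i))) * ballot (S k) (S i)
                              - phi (S (S (S i))) * ballot k i))
    by (intros; rewrite ballot_rec; ring).
  rewrite minus_sum. ring.
Qed.

Lemma ballot_sum_cpow_im k : ballot_sum cpow_im k = - 2 ^ k.
Proof.
  induction k as [|k IH].
  - unfold ballot_sum. simpl. rewrite cpow_im_S, cpow_im_0, cpow_re_0. ring.
  - pose proof (ballot_sum_S cpow_re k) as H.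
    rewrite (cpow_re_SS 0), cpow_im_0 in H.
    rewrite (ballot_sum_ext (fun l => cpow_re (S l)) (fun l => cpow_re l + cpow_im l))
      in H by apply cpow_re_S.
    rewrite (ballot_sum_ext (fun l => cpow_re (S (S l))) (fun l => 2 * cpow_im l))
      in H by apply cpow_re_SS.
    rewrite ballot_sum_plus, ballot_sum_scal, IH in H.
    simpl. lra.
Qed.

Definition c_inner (k : nat) : R :=
  sum_n_m (fun l => (-1) ^ l * binR (2 * k - l) k * Rpower 2 (INR l / 2) / INR l
                    * sin (3 * INR l * PI / 4)) 1 k.

Lemma c_inner_0 : c_inner 0 = 0.
Proof. unfold c_inner. rewrite sum_n_m_zero by lia. reflexivity. Qed.

Lemma c_inner_S k :
  c_inner (S k) = sum_f_R0 (fun m => binR (2 * S k - S m) (S k) / INR (S m) * cpow_im (S m)) k.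
Proof.
  unfold c_inner. rewrite <- sum_n_m_S, sum_n_m_0_sum_f_R0.
  apply sum_eq. intros i _. unfold cpow_im, Rdiv. ring.
Qed.

Lemma binR_diag n : binR n n = 1.
Proof.
  unfold binR, Binomial.C. rewrite Nat.sub_diag. simpl (INR (fact 0)).
  field. apply INR_fact_neq_0.
Qed.

Lemma binR_ballot k m : (m < k)%nat ->
  (INR k + 1) * (binR (2 * S k - S m) (S k) / INR (S m))
  - 2 * (2 * INR k + 1) * (binR (2 * k - S m) k / INR (S m))
  = ballot k m.
Proof.
  intros Hm. destruct (Nat.le_exists_sub (S m) k Hm) as [j [-> _]].
  rewrite ballot_formula by lia. unfold binR, Binomial.C.
  replace (2 * S (j + S m) - S m)%nat with (S (S (m + 2 * j + 1))) by lia.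
  replace (S (S (m + 2 * j + 1)) - S (j + S m))%nat with (S j) by lia.
  replace (2 * (j + S m) - S m)%nat with (m + 2 * j + 1)%nat by lia.
  replace (m + 2 * j + 1 - (j + S m))%nat with j by lia.
  replace (2 * (j + S m) - m - 1)%nat with (m + 2 * j + 1)%nat by lia.
  replace (j + S m - m)%nat with (S j) by lia.
  replace (j + S m)%nat with (S (m + j)) by lia.
  rewrite !INR_fact_S.
  pose proof (INR_fact_neq_0 (m + 2 * j + 1)). pose proof (INR_fact_neq_0 (m + j)).
  pose proof (INR_fact_neq_0 j).
  rewrite !S_INR, !plus_INR, !mult_INR. simpl INR.
  pose proof (pos_INR m). pose proof (pos_INR j).
  field. repeat split; lra.
Qed.

Lemma c_inner_rec k :
  (INR k + 1) * c_inner (S k) - 2 * (2 * INR k + 1) * c_inner k = ballot_sum cpow_im k.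
Proof.
  destruct k as [|k].
  - rewrite c_inner_0, c_inner_S. unfold ballot_sum. simpl.
    rewrite binR_diag. simpl. field.
  - rewrite !c_inner_S. unfold ballot_sum.
    rewrite (tech5 _ k), (tech5 (fun m => cpow_im (S m) * ballot (S k) m) k), ballot_diag.
    replace (2 * S (S k) - S (S k))%nat with (S (S k)) by lia. rewrite binR_diag.
    assert (Hsum : sum_f_R0 (fun m => cpow_im (S m) * ballot (S k) m) k
      = (INR (S k) + 1)
        * sum_f_R0 (fun m => binR (2 * S (S k) - S m) (S (S k)) / INR (S m) * cpow_im (S m)) k
        - 2 * (2 * INR (S k) + 1)
        * sum_f_R0 (fun m => binR (2 * S k - S m) (S k) / INR (S m) * cpow_im (S m)) k).
    { rewrite !scal_sum, <- minus_sum. apply sum_eq. intros m Hm.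
      rewrite <- binR_ballot by lia. ring. }
    rewrite Hsum, (S_INR (S k)). field. pose proof (pos_INR (S k)). lra.
Qed.

Definition alpha_c (k : nat) : R := - (-1) ^ k * INR (fact k) / 2 ^ k * c_inner k.

Lemma alpha_c_rec k :
  alpha_c (S k) + (2 * INR k + 1) * alpha_c k = - (1 / 2) * (-1) ^ k * INR (fact k).
Proof.
  unfold alpha_c. pose proof (c_inner_rec k) as Hrec. rewrite ballot_sum_cpow_im in Hrec.
  assert (2 ^ k <> 0) by (apply pow_nonzero; lra).
  rewrite INR_fact_S, S_INR. simpl pow.
  transitivity ((-1) ^ k * INR (fact k) / (2 * 2 ^ k)
                * ((INR k + 1) * c_inner (S k) - 2 * (2 * INR k + 1) * c_inner k));
    [field; auto |].
  rewrite Hrec. field. auto.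
Qed.

Lemma c_coef_stirling_transform n : c_coef n = stirling_transform alpha_c n.
Proof.
  unfold c_coef, stirling_transform, stirling_sum.
  set (h k := (-1) ^ k * INR (stirling2 n k) * INR (fact k) / 2 ^ k * c_inner k).
  rewrite (sum_n_m_ext _ h) by reflexivity.
  assert (Hh : sum_n_m h 1 n = sum_f_R0 h n).
  { rewrite <- sum_n_m_0_sum_f_R0, (sum_Sn_m h 0 n) by lia.
    unfold h at 2. rewrite c_inner_0, Rmult_0_r.
    symmetry. apply (plus_zero_l (G := R_AbelianMonoid)). }
  rewrite Hh, scal_sum. apply sum_eq. intros k _. unfold h, alpha_c, stirling_coef.
  assert (2 ^ k <> 0) by (apply pow_nonzero; lra).
  pose proof (INR_fact_neq_0 n). rewrite pow_add. field. auto.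
Qed.

Lemma is_derive_PI4_minus_atan_wsqrt t : t < ln 2 ->
  is_derive (fun s => PI / 4 - atan (wsqrt s)) t (1 / 2 / wsqrt t).
Proof.
  intros Ht. pose proof (wsqrt_pos t Ht). pose proof (wsqrt_sqr t Ht) as Hw2.
  pose proof (exp_pos (- t)).
  pose proof (is_derive_comp _ _ _ _ _ (is_derive_atan (wsqrt t)) (is_derive_wsqrt t Ht)) as Hc.
  pose proof (is_derive_minus _ _ _ _ _ (is_derive_const (PI / 4) t) Hc) as Hd.
  replace (1 / 2 / wsqrt t)
    with (minus zero (scal (- exp (- t) / wsqrt t) (/ (1 + (wsqrt t)²)))); [exact Hd |].
  unfold minus, plus, opp, zero, scal, Rsqr; simpl. unfold mult; simpl.
  rewrite Hw2. field. lra.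
Qed.

Lemma is_series_c_coef x : Rabs x < ln 2 ->
  is_series (fun n => c_coef n * x ^ n)
    ((PI / 4 - atan (sqrt (2 * exp (- x) - 1))) / sqrt (2 * exp (- x) - 1)).
Proof.
  intros Hx.
  apply (is_series_ext (fun n => stirling_transform alpha_c n * x ^ n));
    [intros n; rewrite c_coef_stirling_transform; reflexivity |].
  apply (is_series_ode_solution _ (1 / 2) (fun s => PI / 4 - atan (wsqrt s))); [| | | exact Hx].
  - apply stirling_transform_ode, alpha_c_rec.
  - intros t Ht. apply is_derive_PI4_minus_atan_wsqrt. pose proof (Rle_abs t). lra.
  - rewrite wsqrt_0, atan_1. unfold stirling_transform, stirling_sum, alpha_c.
    simpl sum_f_R0. rewrite c_inner_0. ring.
Qed.

Theorem theorem6p1 (x : R) (hx : Rabs x < ln 2) :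
  is_series (fun n => b_coef n * x ^ n) (1 / (4 * sqrt (2 * exp (- x) - 1))) /\
  is_series (fun n => c_coef n * x ^ n)
    ((PI / 4 - atan (sqrt (2 * exp (- x) - 1))) / sqrt (2 * exp (- x) - 1)).
Proof. split; [apply is_series_b_coef | apply is_series_c_coef]; exact hx. Qed.
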